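(* Fix an arm $a$, a time $t$ with $n(\mathcal{T}_{a,t})\ge1$ and $\max\mathcal{T}_{a,t}\le t$, a point $(\hat\theta_a,\hat x_{a,0})\in\Theta\times\mathcal{X}$ and $\gamma\ge0$, and define $$\psi_{a,t}(\gamma)=\max\Big\{\big|g(\theta,h_a^t(x_0))-g(\hat\theta_a,h_a^t(\hat x_{a,0}))\big| : (\theta,x_0)\in\Theta\times\mathcal{X},\ \sum_{t'\in\mathcal{T}_{a,t}}\frac{\big(g(\theta,h_a^{t'}(x_0))-g(\hat\theta_a,h_a^{t'}(\hat x_{a,0}))\big)^2}{2\sigma\,n(\mathcal{T}_{a,t})}\le\gamma\Big\}.$$ Then $\psi_{a,t}(\gamma)\le L_g^2\sqrt{2\sigma\gamma}$.
   Context: Setting: $\Theta\subset\mathbb{R}^{d_\theta}$, $\mathcal{X}\subset\mathbb{R}^{d_x}$ compact convex. For arm $a$, states evolve by known dynamics $x_{s+1}=h_a(x_s,\pi_{a,s})$ along a fixed action sequence, $\pi_{a,s}\in\{0,1\}$; $h_a^s(x_0)$ denotes the state at time $s$ reached from $x_0$. $\mathcal{T}_{a,t}\subseteq\{1,\dots,t\}$ is the set of times up to $t$ at which arm $a$ is selected, $n(\mathcal{T}_{a,t})=|\mathcal{T}_{a,t}|$. $g:\Theta\times\mathcal{X}\to\mathbb{R}$ is $L_g$-bi-Lipschitz: $\frac{1}{L_g}\|u-v\|_2\le|g(u)-g(v)|\le L_g\|u-v\|_2$ for all $u,v\in\Theta\times\mathcal{X}$. The dynamics $h_a(\cdot,b)$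 are $L_h$-Lipschitz in the state with $L_h\le1$. $\sigma>0$ is the sub-Gaussian parameter of the reward distributions. *)

From HB Require Import structures.
From mathcomp Require Import all_boot all_order all_algebra.
From mathcomp Require Import all_classical all_reals all_analysis.
Set Implicit Arguments. Unset Strict Implicit. Unset Printing Implicit Defensive.
Import Order.TTheory GRing.Theory Num.Theory.
Local Open Scope ring_scope.
Local Open Scope classical_set_scope.

Definition sqnorm2 (R : realType) (n : nat) (v : 'rV[R]_n) : R :=
  \sum_(i < n) (v ord0 i) ^+ 2.

Definition dist2 (R : realType) (m n : nat)
  (u1 : 'rV[R]_m) (v1 : 'rV[R]_n) (u2 : 'rV[R]_m) (v2 : 'rV[R]_n) : R :=
  Num.sqrt (sqnorm2 (u1 - u2) + sqnorm2 (v1 - v2)).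

Definition norm2 (R : realType) (n : nat) (v : 'rV[R]_n) : R :=
  Num.sqrt (sqnorm2 v).

Definition convex_rV (R : realType) (n : nat) (A : set 'rV[R]_n) : Prop :=
  convex_set (A : set (convex_lmodType 'rV[R]_n)).

(* h^s(x0): state at time s from x0 along action sequence pi,
   x_{s+1} = h(x_s, pi s). *)
Fixpoint hiter (R : realType) (n : nat) (h : 'rV[R]_n -> bool -> 'rV[R]_n)
  (pi : nat -> bool) (s : nat) (x0 : 'rV[R]_n) : 'rV[R]_n :=
  match s with
  | O => x0
  | S s' => h (hiter h pi s' x0) (pi s')
  end.

(* psi_{a,t}(gamma), the max being taken as a supremum. *)
Definition psi (R : realType) (dth dx : nat)
  (Theta : set 'rV[R]_dth) (X : set 'rV[R]_dx)
  (g : 'rV[R]_dth -> 'rV[R]_dx -> R)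
  (h : 'rV[R]_dx -> bool -> 'rV[R]_dx) (pi : nat -> bool)
  (T : seq nat) (t : nat) (sigma : R)
  (thhat : 'rV[R]_dth) (xhat : 'rV[R]_dx) (gamma : R) : R :=
  sup [set r : R | exists th x0, Theta th /\ X x0 /\
        \sum_(t' <- T)
          (g th (hiter h pi t' x0) - g thhat (hiter h pi t' xhat)) ^+ 2
          / (2 * sigma * (size T)%:R) <= gamma /\
        r = `| g th (hiter h pi t x0) - g thhat (hiter h pi t xhat) | ].

Definition compact_rV (R : realType) (n : nat) (A : set 'rV[R]_n) : Prop :=
  @compact ('rV[R^o]_n) A.

From HB Require Import structures.
From mathcomp Require Import all_boot all_order all_algebra.
From mathcomp Require Import all_classical all_reals all_analysis.
Import Order.TTheory GRing.Theory Num.Theory.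
Local Open Scope ring_scope.
Local Open Scope classical_set_scope.

(* The dynamics are nonexpansive, so the distance in Theta x X between the
   true and the estimated trajectory never increases.  By the bi-Lipschitz
   property of g, the prediction gap at time t is therefore at most Lg^2 times
   the gap at any earlier observed time t'.  Squaring and averaging over the
   observed times bounds the squared gap at t by Lg^4 * 2 sigma gamma. *)

Lemma mulrn_size_le_sum (V : numDomainType) (I : eqType) (r : seq I)
    (a : V) (F : I -> V) :
  (forall i, i \in r -> a <= F i) -> a *+ size r <= \sum_(i <- r) F i.
Proof.
elim: r => [|j r IHr] le_aF; first by rewrite big_nil.
rewrite big_cons mulrS lerD ?le_aF ?mem_head // IHr // => i ri.
by rewrite le_aF // in_cons ri orbT.
Qed.

Lemma ge0_ge_sup (R : realType) (A : set R) (x : R) :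
  0 <= x -> ubound A x -> sup A <= x.
Proof.
move=> x_ge0 ubAx; have [->|/set0P A_neq0] := eqVneq A set0.
- by rewrite sup0.
- exact: ge_sup.
Qed.

Lemma normr_le_mul_sqrt (R : rcfType) (a b c : R) :
  0 <= b -> 0 <= c -> a ^+ 2 <= b ^+ 2 * c -> `|a| <= b * Num.sqrt c.
Proof.
move=> b_ge0 c_ge0 le_a2; rewrite -sqrtr_sqr -[b]ger0_norm // -sqrtr_sqr.
by rewrite -sqrtrM ?sqr_ge0 // ler_wsqrtr.
Qed.

Lemma sqnorm2_ge0 (R : realType) n (v : 'rV[R]_n) : 0 <= sqnorm2 v.
Proof. by apply: sumr_ge0 => i _; exact: sqr_ge0. Qed.

Lemma norm2_ge0 (R : realType) n (v : 'rV[R]_n) : 0 <= norm2 v.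
Proof. exact: sqrtr_ge0. Qed.

Lemma sqr_norm2 (R : realType) n (v : 'rV[R]_n) : norm2 v ^+ 2 = sqnorm2 v.
Proof. by rewrite sqr_sqrtr // sqnorm2_ge0. Qed.

Lemma ler_dist2 (R : realType) m n (u1 u2 : 'rV[R]_m) (a1 a2 b1 b2 : 'rV[R]_n) :
  norm2 (a1 - a2) <= norm2 (b1 - b2) -> dist2 u1 a1 u2 a2 <= dist2 u1 b1 u2 b2.
Proof.
move=> le_ab; rewrite /dist2 ler_wsqrtr // lerD2l -!sqr_norm2.
by rewrite lerXn2r // nnegrE norm2_ge0.
Qed.

Section PredictionGap.

Variables (R : realType) (dth dx : nat).
Variables (Theta : set 'rV[R]_dth) (X : set 'rV[R]_dx).
Variables (g : 'rV[R]_dth -> 'rV[R]_dx -> R) (Lg : R).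
Variables (h : 'rV[R]_dx -> bool -> 'rV[R]_dx) (pi : nat -> bool).

Hypothesis Lg_gt0 : 0 < Lg.
Hypothesis g_biLipschitz : forall th1 x1 th2 x2,
  Theta th1 -> X x1 -> Theta th2 -> X x2 ->
  Lg^-1 * dist2 th1 x1 th2 x2 <= `| g th1 x1 - g th2 x2 | /\
  `| g th1 x1 - g th2 x2 | <= Lg * dist2 th1 x1 th2 x2.
Hypothesis h_closed : forall x b, X x -> X (h x b).
Hypothesis h_nonexpansive : forall x y b,
  X x -> X y -> norm2 (h x b - h y b) <= norm2 (x - y).

Lemma hiter_closed s {x} : X x -> X (hiter h pi s x).
Proof. by move=> Xx; elim: s => [|s IHs] //=; apply: h_closed. Qed.

Lemma norm2_hiter_nonincreasing s s' x y : X x -> X y -> (s <= s')%N ->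
  norm2 (hiter h pi s' x - hiter h pi s' y) <=
  norm2 (hiter h pi s x - hiter h pi s y).
Proof.
move=> Xx Xy /subnKC <-; elim: (s' - s)%N => [|k IHk]; first by rewrite addn0.
rewrite addnS /=; apply: le_trans IHk.
exact: h_nonexpansive _ _ _ (hiter_closed _ Xx) (hiter_closed _ Xy).
Qed.

Variables (thhat : 'rV[R]_dth) (xhat : 'rV[R]_dx).
Hypotheses (Theta_thhat : Theta thhat) (X_xhat : X xhat).

Definition gap th x0 s := g th (hiter h pi s x0) - g thhat (hiter h pi s xhat).

Lemma gap_le_earlier th x0 s s' : Theta th -> X x0 -> (s <= s')%N ->
  `|gap th x0 s'| <= Lg ^+ 2 * `|gap th x0 s|.
Proof.
move=> Th Xx0 le_ss'.
have [_ gap_s'_le] := g_biLipschitz _ _ _ _ Th (hiter_closed s' Xx0) Theta_thhat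
  (hiter_closed s' X_xhat).
have [gap_s_ge _] := g_biLipschitz _ _ _ _ Th (hiter_closed s Xx0) Theta_thhat
  (hiter_closed s X_xhat).
rewrite ler_pdivrMl // in gap_s_ge.
apply: (le_trans gap_s'_le); rewrite expr2 -mulrA ler_pM2l //.
apply: le_trans gap_s_ge.
exact/ler_dist2/norm2_hiter_nonincreasing.
Qed.

Lemma gap_sqr_le_mean T t th x0 : Theta th -> X x0 ->
  (forall t', t' \in T -> t' <= t)%N ->
  gap th x0 t ^+ 2 *+ size T <= (Lg ^+ 2) ^+ 2 * \sum_(t' <- T) gap th x0 t' ^+ 2.
Proof.
move=> Th Xx0 le_Tt; rewrite mulr_sumr; apply: mulrn_size_le_sum => t' /le_Tt le_t't.
rewrite -[gap th x0 t ^+ 2]real_normK ?num_real //.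
rewrite -[gap th x0 t' ^+ 2]real_normK ?num_real // -exprMn.
apply: lerXn2r; rewrite ?nnegrE ?gap_le_earlier //.
by rewrite mulr_ge0 ?sqr_ge0.
Qed.

Lemma psi_le T t sigma gamma : 0 < sigma -> (0 < size T)%N ->
  (forall t', t' \in T -> t' <= t)%N -> 0 <= gamma ->
  psi Theta X g h pi T t sigma thhat xhat gamma
    <= Lg ^+ 2 * Num.sqrt (2 * sigma * gamma).
Proof.
move=> sigma_gt0 T_gt0 le_Tt gamma_ge0.
have n_gt0 : 0 < (size T)%:R :> R by rewrite ltr0n.
have c_gt0 : 0 < 2 * sigma * (size T)%:R by rewrite !mulr_gt0.
have bound_ge0 : 0 <= 2 * sigma * gamma by rewrite mulr_ge0 // ltW // mulr_gt0.
apply: ge0_ge_sup; first by rewrite mulr_ge0 ?sqrtr_ge0 ?sqr_ge0.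
move=> _ [th [x0 [Th [Xx0 [mean_le ->]]]]].
apply: normr_le_mul_sqrt; rewrite ?sqr_ge0 //.
rewrite -mulr_suml ler_pdivrMr // mulrCA mulrA in mean_le.
rewrite -(ler_pM2r n_gt0) mulr_natr (le_trans (gap_sqr_le_mean _ _ _ _ Th Xx0 le_Tt)) //.
rewrite -(mulrA _ (2 * sigma * gamma)); apply: ler_wpM2l; [exact: sqr_ge0 | exact: mean_le].
Qed.

End PredictionGap.

Theorem lemma1 (R : realType) (dth dx : nat)
  (Theta : set 'rV[R]_dth) (X : set 'rV[R]_dx)
  (g : 'rV[R]_dth -> 'rV[R]_dx -> R) (Lg : R)
  (h : 'rV[R]_dx -> bool -> 'rV[R]_dx) (Lh : R) (pi : nat -> bool)
  (sigma : R) (T : seq nat) (t : nat)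
  (thhat : 'rV[R]_dth) (xhat : 'rV[R]_dx) (gamma : R) :
  compact_rV Theta -> convex_rV Theta ->
  compact_rV X -> convex_rV X ->
  0 < Lg ->
  (forall th1 x1 th2 x2, Theta th1 -> X x1 -> Theta th2 -> X x2 ->
     Lg^-1 * dist2 th1 x1 th2 x2 <= `| g th1 x1 - g th2 x2 | /\
     `| g th1 x1 - g th2 x2 | <= Lg * dist2 th1 x1 th2 x2) ->
  (forall x b, X x -> X (h x b)) ->
  0 <= Lh -> Lh <= 1 ->
  (forall x y b, X x -> X y -> norm2 (h x b - h y b) <= Lh * norm2 (x - y)) ->
  0 < sigma ->
  uniq T -> (1 <= size T)%N -> (forall t', t' \in T -> (1 <= t' <= t)%N) ->
  Theta thhat -> X xhat -> 0 <= gamma ->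
  psi Theta X g h pi T t sigma thhat xhat gamma
    <= Lg ^+ 2 * Num.sqrt (2 * sigma * gamma).
Proof.
move=> _ _ _ _ Lg_gt0 g_biLip h_closed _ Lh_le1 h_Lip sigma_gt0 _ T_gt0 T_le_t
  Th_hat X_hat gamma_ge0.
have h_nonexpansive x y b : X x -> X y -> norm2 (h x b - h y b) <= norm2 (x - y).
  move=> Xx Xy; apply: le_trans (h_Lip x y b Xx Xy) _.
  by rewrite ler_piMl ?norm2_ge0.
apply: psi_le => // t' /T_le_t /andP[_ //].
Qed.
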